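(* Let $K$ be a Cantor set, let $T:K\to K$ be a homeomorphism, and let $K_1,\dots,K_N$ be pairwise disjoint Cantor sets with $K=\bigcup_{i=1}^N K_i$. Suppose that for every $1\le i\le N$ at least one of the following holds: (i) for every $y\in K_i$, $T^{-1}(y)\in K_i$; (ii) for every $x\in K_i$, $T(x)\in K_i$. Then there exists a homeomorphism $\widetilde T:K\to K$ such that for every $x\in K$ and every $i$, $\widetilde T(x)\in K_i$ if and only if $T(x)\in K_i$, and every orbit of $\widetilde T$ converges to a fixed point of $\widetilde T$.
   Context: A Cantor set is a nonempty totally disconnected, perfect, compact metric space. *)

From HB Require Import structures.
From mathcomp Require Import all_boot all_order all_algebra.
From mathcomp Require Import all_classical all_reals all_analysis.
Set Implicit Arguments. Unset Strict Implicit. Unset Printing Implicit Defensive.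
Import Order.TTheory GRing.Theory Num.Theory.
Local Open Scope classical_set_scope.

Definition cantor_set {T : topologicalType} (A : set T) : Prop :=
  [/\ A !=set0, compact A, totally_disconnected A & perfect_set A].

Definition homeomorphism {T : topologicalType} (f : T -> T) : Prop :=
  exists g : T -> T, [/\ cancel f g, cancel g f, continuous f & continuous g].

From HB Require Import structures.
From mathcomp Require Import all_boot all_order all_algebra.
From mathcomp Require Import all_classical all_reals all_analysis.
Import Order.TTheory GRing.Theory Num.Theory.
Local Open Scope classical_set_scope.
Set Implicit Arguments. Unset Strict Implicit. Unset Printing Implicit Defensive.

(* Put [L_i := T^-1(K_i)]: the [L_i] and the [K_i] are two partitions of [K]
   into clopen sets, and it suffices to glue homeomorphisms [F_i : L_i -> K_i].
   If [L_i = K_i] take the identity.  Otherwise, in case (i) [L_i] is a proper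
   subset of [K_i] and in case (ii) [K_i] is a proper subset of [L_i]; write the
   larger set as [A `|` B] with [A] the smaller one.  Identifying [A] and [B]
   with the Cantor space [2^N] (every nonempty clopen subset of a Cantor set is
   one), the map prepending [0] to points of [A] and [1] to points of [B] is a
   homeomorphism [A `|` B -> A] whose orbits converge to [000...]; its inverse
   drops the first digit, so its orbits in [A] other than that fixed point leave
   [A].  Take [F_i] to be this contraction in case (ii) and its inverse in case
   (i).  An orbit of the glued map is then fixed, or converges inside a piece of
   type (ii), or leaves a piece [L_i] of type (i) for [K_i `\` L_i], which only
   a piece of type (ii) can contain.  Zero-dimensionality, needed for the
   identification with [2^N], follows from total disconnectedness through
   quasi-components. *)

(** * Quasi-components *)

Section quasi_component.
Context {T : topologicalType}.
Hypothesis cT : compact [set: T].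

Definition quasi_component (x : T) := \bigcap_(C in [set C | clopen C /\ C x]) C.

Lemma quasi_component_refl x : quasi_component x x.
Proof. by move=> C []. Qed.

Lemma closed_quasi_component x : closed (quasi_component x).
Proof. by apply: closed_bigI => C [[]]. Qed.

(* Otherwise the sets [C `&` ~` W], for clopen [C] containing [x], generate a
   proper filter, and a cluster point of it is in [quasi_component x] but not
   in [W]. *)
Lemma quasi_component_sub_open x W : open W -> quasi_component x `<=` W ->
  exists C, [/\ clopen C, C x & C `<=` W].
Proof.
move=> oW QW; apply: contrapT => noC.
pose F := filter_from [set C | clopen C /\ C x] (fun C => C `&` ~` W).
have PF : ProperFilter F.
  apply: filter_from_proper.
    apply: filter_from_filter; first by exists setT; split => //; exact: clopenT.
    move=> A B [cA Ax] [cB Bx]; exists (A `&` B); first by split => //; exact: clopenI.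
    by move=> z [[Az Bz] nWz]; split; split.
  move=> A [cA Ax]; apply: contrapT => A0; apply: noC; exists A; split => //.
  by move=> z Az; apply: contrapT => nWz; apply: A0; exists z.
have [z [_ Fz]] := cT PF filterT; rewrite clusterE in Fz.
have inF C : clopen C -> C x -> (C `&` ~` W) z.
  move=> clC Cx; have clCW : closed (C `&` ~` W).
    by apply: closedI; [case: clC | exact: open_closedC].
  by rewrite ((closure_id _).1 clCW); apply: Fz; exists C.
have [_ nWz] := inF _ clopenT I; apply: nWz; apply: QW => C [clC Cx].
by have [] := inF C clC Cx.
Qed.

Hypothesis hT : hausdorff_space T.

(* Compactness makes [T] normal, which separates the two closed parts by
   disjoint open sets; a clopen neighbourhood of [x] inside their union
   then cuts off [P2]. *)
Lemma quasi_component_split x (P1 P2 : set T) : closed P1 -> closed P2 ->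
  P1 `&` P2 = set0 -> quasi_component x = P1 `|` P2 -> P1 x -> P2 = set0.
Proof.
move=> cP1 cP2 P12 QP P1x.
have : set_nbhs P1 (~` P2).
  apply/set_nbhsP; exists (~` P2); split => //; first exact: closed_openC.
  by move=> z P1z P2z; have : (P1 `&` P2) z by []; rewrite P12.
have normalT := compact_normal hT cT.
move=> /(normalT _ cP1) [W /set_nbhsP [U [oU P1U UW]] clW].
pose V := ~` closure W.
have oV : open V by exact/closed_openC/closed_closure.
have P2V : P2 `<=` V by move=> z P2z /clW.
have UV z : U z -> ~ V z by move=> /UW Wz; apply; exact: subset_closure.
have [C [clC Cx CUV]] : exists C, [/\ clopen C, C x & C `<=` U `|` V].
  by apply: quasi_component_sub_open; [exact: openU | rewrite QP => z [/P1U|/P2V]; [left|right]].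
have clCU : clopen (C `&` U).
  split; first by apply: openI => //; case: clC.
  have -> : C `&` U = C `&` ~` V.
    apply/seteqP; split => z [Cz]; first by move=> /UV.
    by move=> nVz; split => //; case: (CUV _ Cz).
  by apply: closedI; [case: clC | exact: open_closedC].
apply/seteqP; split => // z P2z.
have : quasi_component x z by rewrite QP; right.
move=> /(_ _ (conj clCU (conj Cx (P1U _ P1x)))) [_ /UV].
by move/(_ (P2V _ P2z)).
Qed.

Lemma connected_quasi_component x : connected (quasi_component x).
Proof.
move=> B B0 [U oU BQU] [C cC BQC].
have cB : closed B by rewrite BQC; apply: closedI => //; exact: closed_quasi_component.
have cBc : closed (quasi_component x `&` ~` U).
  by apply: closedI; [exact: closed_quasi_component | exact: open_closedC].
have QB : quasi_component x = B `|` (quasi_component x `&` ~` U).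
  rewrite BQU; apply/seteqP; split => [z Qz|z [[]|[]]//].
  by have [Uz|nUz] := pselect (U z); [left|right].
have Bc : B `&` (quasi_component x `&` ~` U) = set0.
  by rewrite BQU; apply/seteqP; split => // z [[_ ?] [_ ?]].
have [Bx|nBx] := pselect (B x).
  by rewrite QB (quasi_component_split cB cBc Bc QB Bx) setU0.
have Ux : ~ U x by move=> Ux; apply: nBx; rewrite BQU; split => //; exact: quasi_component_refl.
rewrite setIC setUC in Bc QB.
have B00 := quasi_component_split cBc cB Bc QB (conj (@quasi_component_refl x) Ux).
by case: B0 => z; rewrite B00.
Qed.

Lemma totally_disconnected_zero_dimensional :
  totally_disconnected [set: T] -> zero_dimensional T.
Proof.
move=> tdT x y xy; apply: contrapT => noC.
have Qy : quasi_component x y.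
  by move=> C [clC Cx]; apply: contrapT => nCy; apply: noC; exists C.
have : connected_component [set: T] x y.
  exists (quasi_component x) => //.
  by split; [exact: quasi_component_refl | | exact: connected_quasi_component].
by rewrite tdT // => /= yx; move: xy; rewrite yx eqxx.
Qed.

End quasi_component.

(** * Clopen subsets as copies of the Cantor space *)

(* Continuity is that of the ambient maps at the points of [A] and [B]; for
   open [A] and [B] it is continuity of the restrictions. *)
Record homeo_on {X Y : topologicalType} (A : set X) (B : set Y)
    (f : X -> Y) (g : Y -> X) : Prop := HomeoOn {
  homeo_mapS : forall x, A x -> B (f x);
  homeo_invS : forall y, B y -> A (g y);
  homeo_mapK : forall x, A x -> g (f x) = x;
  homeo_invK : forall y, B y -> f (g y) = y;
  homeo_map_cont : forall x, A x -> {for x, continuous f};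
  homeo_inv_cont : forall y, B y -> {for y, continuous g} }.

Lemma homeo_on_id {X : topologicalType} (A : set X) : homeo_on A A id id.
Proof. by split => // x _; exact: cvg_id. Qed.

Lemma homeo_on_sym {X Y : topologicalType} (A : set X) (B : set Y) f g :
  homeo_on A B f g -> homeo_on B A g f.
Proof. by case=> *; split. Qed.

Lemma near_eq_continuous {X Y : topologicalType} (f g : X -> Y) x :
  (\forall y \near x, f y = g y) -> {for x, continuous g} -> {for x, continuous f}.
Proof.
move=> e cg U; have fxgx : f x = g x := nbhs_singleton e.
rewrite fxgx => /cg gU; apply: (filterS _ (filterI e gU)) => y [fy gy].
by rewrite /= fy.
Qed.

(* [homeomorphism_cantor_like] needs a pointed space; the point [s] is a
   witness of [S !=set0]. *)
Definition pset_type {R : realType} {K : pseudoMetricType R} (S : set K) (s : S) : Type :=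
  set_type S.
HB.instance Definition _ {R : realType} {K : pseudoMetricType R} (S : set K) (s : S) :=
  PseudoMetric.on (pset_type s).
HB.instance Definition _ {R : realType} {K : pseudoMetricType R} (S : set K) (s : S) :=
  isPointed.Build (pset_type s) s.

Section clopen_cantor_chart.
Context {R : realType} {K : pseudoMetricType R}.

Section pset_type.
Variables (S : set K) (s : S).

Lemma open_pset_type (U : set (pset_type s)) :
  open U <-> exists2 V : set K, open V & (fun u : pset_type s => V (val u)) = U.
Proof. by split => -[V oV <-]; exists V. Qed.

Lemma nbhs_pset_type (u : pset_type s) (U : set (pset_type s)) :
  nbhs u U <-> exists V : set K, [/\ open V, V (val u) & forall v : pset_type s, V (val v) -> U v].
Proof.
rewrite nbhsE; split.
  by move=> [B [/open_pset_type [V oV <-] Vu] BU]; exists V; split => // v /BU.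
move=> [V [oV Vu VU]]; exists (fun v : pset_type s => V (val v)) => //.
by split => //; apply/open_pset_type; exists V.
Qed.

Hypotheses (hK : hausdorff_space K) (cK : compact [set: K]).
Hypotheses (pK : perfect_set [set: K]) (zK : zero_dimensional K).
Hypothesis clS : clopen S.

Let in_pset (y : K) (Sy : S y) : pset_type s := @exist _ _ y (mem_set Sy).

Let pset_valP (u : pset_type s) : S (val u).
Proof. exact/set_mem/(valP u). Qed.

Lemma perfect_pset_type : perfect_set [set: pset_type s].
Proof.
split; first exact: closedT.
apply/seteqP; split => // u _ U /nbhs_pset_type [V [oV Vu VU]].
have nbVS : nbhs (val u) (V `&` S).
  by apply: open_nbhs_nbhs; split; [apply: openI => //; case: clS | split => //].
case: pK => _ lpK.
have : limit_point [set: K] (val u) by rewrite lpK.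
move=> /(_ _ nbVS) [y [yu _ [Vy Sy]]].
by exists (in_pset Sy); split => //; exact: VU.
Qed.

Lemma compact_pset_type : compact [set: pset_type s].
Proof.
move=> F PF _.
have cS : compact S by apply: (subclosed_compact _ cK) => //; case: clS.
have [y [Sy cly]] := cS _ (fmap_proper_filter val PF)
  (filterS (fun u _ => pset_valP u) filterT).
exists (in_pset Sy); split => // A B FA /nbhs_pset_type [V [oV Vy VB]].
have FvalA : F (val @^-1` (val @` A)) by apply: filterS FA => u Au; exists u.
have [_ [[a Aa <-] Va]] := cly _ _ FvalA (open_nbhs_nbhs (conj oV Vy)).
by exists a; split => //; exact: VB.
Qed.

Lemma hausdorff_pset_type : hausdorff_space (pset_type s).
Proof.
rewrite open_hausdorff => u v uv.
have : val u != val v by apply: contra uv => /eqP /val_inj ->.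
move: hK; rewrite open_hausdorff => hK' /hK' [[A B] /= [Au Bv] [oA oB /eqP AB]].
exists ((fun w : pset_type s => A (val w)), (fun w : pset_type s => B (val w))) => /=.
  by split; rewrite inE; [move: Au | move: Bv]; rewrite inE.
split; [apply/open_pset_type; exists A | apply/open_pset_type; exists B |] => //.
apply/eqP/seteqP; split => // w [Aw Bw].
by have : (A `&` B) (val w) by []; rewrite AB.
Qed.

Lemma zero_dimensional_pset_type : zero_dimensional (pset_type s).
Proof.
move=> u v uv.
have /zK [U [[oU cU] Uu Uv]] : val u != val v by apply: contra uv => /eqP /val_inj ->.
exists (fun w : pset_type s => U (val w)); split => //; split.
  by apply/open_pset_type; exists U.
rewrite -[X in closed X]setCK; apply: open_closedC; apply/open_pset_type.
by exists (~` U) => //; exact: closed_openC.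
Qed.

Lemma cantor_like_pset_type : cantor_like (pset_type s).
Proof.
split; [exact: perfect_pset_type | exact: compact_pset_type |
  exact: hausdorff_pset_type | exact: zero_dimensional_pset_type].
Qed.

End pset_type.

Hypotheses (hK : hausdorff_space K) (cK : compact [set: K]).
Hypotheses (pK : perfect_set [set: K]) (zK : zero_dimensional K).

Lemma clopen_cantor_chart (S : set K) : clopen S -> S !=set0 ->
  exists (psi : cantor_space -> K) (phi : K -> cantor_space),
    homeo_on [set: cantor_space] S psi phi.
Proof.
move=> clS [s0 Ss0]; pose s : S := exist _ s0 (mem_set Ss0).
have [f [cf clf]] := homeomorphism_cantor_like (cantor_like_pset_type s hK cK pK zK clS).
have cfV : continuous (f^-1 : pset_type s -> cantor_space).
  apply/continuous_closedP => A cA.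
  have -> : f^-1 @^-1` A = f @` A.
    apply/seteqP; split => z; first by move=> Az; exists (f^-1 z) => //; rewrite invK // inE.
    by move=> [a Aa <-] /=; rewrite funK // inE.
  exact: clf.
exists (fun c => val (f c)), (fun x => f^-1 (insubd s x)); split => //.
- by move=> c _; exact/set_mem/(valP (f c)).
- by move=> c _ /=; rewrite valKd funK // inE.
- by move=> x Sx /=; rewrite invK ?inE // insubdK //; exact: mem_set.
- move=> c _; apply: continuous_comp; first exact: cf.
  move=> U; rewrite nbhsE => -[B [oB Bfc] BU].
  by apply/nbhs_pset_type; exists B; split => // v /BU.
- move=> x Sx; apply: (@continuous_comp K (pset_type s) cantor_space (insubd s) (f^-1)%FUN).
    move=> U /nbhs_pset_type [V [oV Vx VU]].
    apply: (@filterS _ _ _ (V `&` S)).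
      by move=> z [Vz Sz] /=; apply: VU; rewrite insubdK //; exact: mem_set.
    apply: open_nbhs_nbhs; split; first by apply: openI => //; case: clS.
    by split => //; move: Vx; rewrite insubdK //; exact: mem_set.
  exact: cfV.
Qed.

End clopen_cantor_chart.

(** * Contracting two clopen sets onto one *)

Definition ccons (b : bool) (c : cantor_space) : cantor_space :=
  fun n => if n is k.+1 then c k else b.
Definition ctail (c : cantor_space) : cantor_space := fun n => c n.+1.
Definition czero : cantor_space := fun _ => false.

Lemma cvg_cantorP {X : Type} (F : set_system X) (FF : Filter F)
    (g : X -> cantor_space) (c : cantor_space) :
  g @ F --> c <-> forall n, F [set x | g x n = c n].
Proof.
rewrite (@pointwise_cvgP nat bool (g @ F) c (fmap_filter _ _)).
by split => h n; [have /discrete_cvg := h n | apply/discrete_cvg; exact: h n].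
Qed.

Lemma nbhs_cantor_coord (c : cantor_space) n : nbhs c [set d : cantor_space | d n = c n].
Proof. by have /cvg_cantorP := @cvg_id _ (nbhs c); apply. Qed.

Lemma continuous_ccons b : continuous (ccons b).
Proof.
move=> c; apply/(@cvg_cantorP _ (nbhs c)) => -[|n] /=; last exact: nbhs_cantor_coord.
exact: filterS filterT.
Qed.

Lemma continuous_ctail : continuous ctail.
Proof. by move=> c; apply/(@cvg_cantorP _ (nbhs c)) => n; exact: nbhs_cantor_coord. Qed.

Lemma ccons_ctail c : ccons (c 0%N) (ctail c) = c.
Proof. by apply: functional_extensionality_dep => -[|n]. Qed.

Lemma ccons_czero : ccons false czero = czero.
Proof. by apply: functional_extensionality_dep => -[|n]. Qed.

Lemma iter_ccons_false_cvg (c : cantor_space) :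
  (fun n => iter n (ccons false) c) @ \oo --> czero.
Proof.
apply/(@cvg_cantorP _ \oo) => t; exists t.+1 => // n /= tn.
by elim: n t tn => [//|n IH] [|t] //= /IH.
Qed.

Definition escapes {X : Type} (A : set X) (g : X -> X) (x : X) :=
  exists n, (forall m, (m < n)%N -> A (iter m g x)) /\ ~ A (iter n g x).

Definition escaping {X : Type} (A B : set X) (F : X -> X) :=
  A `<=` B /\ forall x, A x -> F x = x \/ escapes A F x.

Definition attracting {X : topologicalType} (A B : set X) (F : X -> X) :=
  B `<=` A /\ exists p, [/\ B p, F p = p & forall x, B x -> (fun n => iter n F x) @ \oo --> p].

Section contraction.
Context {X : topologicalType}.
Variables (A B : set X) (psiA : cantor_space -> X) (phiA : X -> cantor_space).
Variables (psiB : cantor_space -> X) (phiB : X -> cantor_space).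
Hypotheses (oA : open A) (oB : open B) (AB : A `&` B = set0).
Hypotheses (chA : homeo_on [set: cantor_space] A psiA phiA).
Hypotheses (chB : homeo_on [set: cantor_space] B psiB phiB).

Definition contract (x : X) : X :=
  if pselect (A x) then psiA (ccons false (phiA x)) else psiA (ccons true (phiB x)).
Definition expand (y : X) : X :=
  if phiA y 0%N then psiB (ctail (phiA y)) else psiA (ctail (phiA y)).

Let psiAS c : A (psiA c). Proof. exact: (homeo_mapS chA (I : setT c)). Qed.
Let psiBS c : B (psiB c). Proof. exact: (homeo_mapS chB (I : setT c)). Qed.
Let psiAK c : phiA (psiA c) = c. Proof. exact: (homeo_mapK chA (I : setT c)). Qed.
Let psiBK c : phiB (psiB c) = c. Proof. exact: (homeo_mapK chB (I : setT c)). Qed.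

Lemma contractA x : A x -> contract x = psiA (ccons false (phiA x)).
Proof. by move=> Ax; rewrite /contract; case: pselect. Qed.

Lemma contractB x : B x -> contract x = psiA (ccons true (phiB x)).
Proof.
move=> Bx; rewrite /contract; case: pselect => // Ax.
by have : (A `&` B) x by []; rewrite AB.
Qed.

Lemma contractK x : (A `|` B) x -> expand (contract x) = x.
Proof.
case=> [Ax|Bx].
  by rewrite contractA // /expand psiAK (homeo_invK chA Ax).
by rewrite contractB // /expand psiAK (homeo_invK chB Bx).
Qed.

Lemma expandK y : A y -> contract (expand y) = y.
Proof.
move=> Ay; rewrite -[RHS](homeo_invK chA Ay) -[in RHS](ccons_ctail (phiA y)) /expand.
case: (phiA y 0%N); first by rewrite contractB // psiBK.
by rewrite contractA // psiAK.
Qed.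

Lemma contract_continuous x : (A `|` B) x -> {for x, continuous contract}.
Proof.
case=> [Ax|Bx].
  apply: (@near_eq_continuous _ _ _ (psiA \o ccons false \o phiA)).
    by apply: filterS (open_nbhs_nbhs (conj oA Ax)) => z Az; rewrite contractA.
  apply: continuous_comp; first apply: (homeo_inv_cont chA Ax).
  by apply: continuous_comp; [exact: continuous_ccons | apply: (homeo_map_cont chA (I : setT _))].
apply: (@near_eq_continuous _ _ _ (psiA \o ccons true \o phiB)).
  by apply: filterS (open_nbhs_nbhs (conj oB Bx)) => z Bz; rewrite contractB.
apply: continuous_comp; first apply: (homeo_inv_cont chB Bx).
by apply: continuous_comp; [exact: continuous_ccons | apply: (homeo_map_cont chA (I : setT _))].
Qed.

Lemma expand_continuous y : A y -> {for y, continuous expand}.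
Proof.
move=> Ay; have cphiA := homeo_inv_cont chA Ay.
have digit0 : \forall z \near y, phiA z 0%N = phiA y 0%N.
  exact: cphiA _ (nbhs_cantor_coord (phiA y) 0).
case E: (phiA y 0%N).
  apply: (@near_eq_continuous _ _ _ (psiB \o ctail \o phiA)).
    by apply: filterS digit0 => z; rewrite /expand E => ->.
  apply: continuous_comp => //.
  by apply: continuous_comp; [exact: continuous_ctail | apply: (homeo_map_cont chB (I : setT _))].
apply: (@near_eq_continuous _ _ _ (psiA \o ctail \o phiA)).
  by apply: filterS digit0 => z; rewrite /expand E => ->.
apply: continuous_comp => //.
by apply: continuous_comp; [exact: continuous_ctail | apply: (homeo_map_cont chA (I : setT _))].
Qed.

Lemma homeo_on_contract : homeo_on (A `|` B) A contract expand.
Proof.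
split; [| |exact: contractK|exact: expandK|exact: contract_continuous|exact: expand_continuous].
- by move=> x _; rewrite /contract; case: pselect => ?; exact: psiAS.
- by move=> y _; rewrite /expand; case: ifP => _; [right; exact: psiBS | left; exact: psiAS].
Qed.

Lemma contract_czero : contract (psiA czero) = psiA czero.
Proof. by rewrite contractA // psiAK ccons_czero. Qed.

Lemma iter_contract_cvg x : A x -> (fun n => iter n contract x) @ \oo --> psiA czero.
Proof.
move=> Ax; have iterE n : iter n contract x = psiA (iter n (ccons false) (phiA x)).
  elim: n => [|n /= ->]; first by rewrite (homeo_invK chA Ax).
  by rewrite contractA ?psiAK.
under eq_fun do rewrite iterE.
apply: continuous_cvg; first apply: (homeo_map_cont chA (I : setT _)).
exact: iter_ccons_false_cvg.
Qed.

(* Going backwards, [expand] shifts the digits of [phiA y]: the orbit stays in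
   [A] until the first [true] digit, then lands in [B]. *)
Lemma expand_escapes y : A y -> y = psiA czero \/ escapes A expand y.
Proof.
move=> Ay; set c := phiA y.
have [[k ck]|no_true] := pselect (exists k, c k = true); last first.
  left; rewrite -(homeo_invK chA Ay) -/c; congr psiA.
  by apply: functional_extensionality_dep => k; apply/negbTE/negP => ck; apply: no_true; exists k.
right; have [n cn minn] := ex_minnP (ex_intro (fun k => c k) k ck).
have iterE m : (m <= n)%N -> iter m expand y = psiA (fun i => c (i + m)%N).
  elim: m => [_|m IH mn] /=.
    rewrite -(homeo_invK chA Ay) -/c; congr psiA.
    by apply: functional_extensionality_dep => i; rewrite addn0.
  rewrite IH ?(ltnW mn) // /expand psiAK /= add0n.
  have -> : c m = false by apply/negbTE/negP => /minn; rewrite leqNgt mn.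
  by congr psiA; apply: functional_extensionality_dep => i; rewrite /ctail addSnnS.
exists n.+1; split; first by move=> m mn; rewrite iterE.
rewrite /= iterE // /expand psiAK /= add0n cn => Aout.
by have : (A `&` B) (psiB (ctail (fun i => c (i + n)%N))) by []; rewrite AB.
Qed.

End contraction.

Lemma clopenD {T : topologicalType} (A B : set T) : clopen A -> clopen B -> clopen (A `\` B).
Proof. by move=> clA clB; rewrite setDE; apply: clopenI => //; exact: clopenC. Qed.

Section clopen_pieces.
Context {R : realType} {K : pseudoMetricType R}.
Hypotheses (hK : hausdorff_space K) (cK : compact [set: K]).
Hypotheses (pK : perfect_set [set: K]) (zK : zero_dimensional K).

Lemma clopen_contraction (A B : set K) : clopen A -> clopen B -> A !=set0 -> B !=set0 ->
  A `&` B = set0 -> exists (h h' : K -> K) (p : K),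
  [/\ homeo_on (A `|` B) A h h', A p, h p = p,
      (forall x, A x -> (fun n => iter n h x) @ \oo --> p) &
      (forall y, A y -> y = p \/ escapes A h' y)].
Proof.
move=> [oA cA] [oB cB] A0 B0 AB.
have [psiA [phiA chA]] := clopen_cantor_chart hK cK pK zK (conj oA cA) A0.
have [psiB [phiB chB]] := clopen_cantor_chart hK cK pK zK (conj oB cB) B0.
exists (contract A psiA phiA phiB), (expand psiA phiA psiB), (psiA czero); split.
- exact: homeo_on_contract.
- exact: (homeo_mapS chA (I : setT _)).
- exact: contract_czero.
- by move=> x; exact: iter_contract_cvg.
- exact: (expand_escapes AB chA chB).
Qed.

Lemma clopen_piece (A B : set K) : clopen A -> clopen B -> A !=set0 -> B !=set0 ->
  A `<=` B \/ B `<=` A ->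
  exists F G, homeo_on A B F G /\ (escaping A B F \/ attracting A B F).
Proof.
move=> clA clB A0 B0 AB.
have [<-|AneB] := pselect (A = B).
  by exists id, id; split; [exact: homeo_on_id | left; split => // x _; left].
case: AB => [AB|BA].
- have BA0 : B `\` A !=set0.
    by apply/set0P/eqP; rewrite setD_eq0 => BA; apply: AneB; rewrite eqEsubset.
  have [h [h' [p [hom Ap hp hcvg hesc]]]] :=
    clopen_contraction clA (clopenD clB clA) A0 BA0 (setDIK A B).
  rewrite setDUK // in hom.
  exists h', h; split; first exact: homeo_on_sym.
  left; split => // y Ay; have [->|] := hesc y Ay; last by right.
  by left; rewrite -{1}hp (homeo_mapK hom) //; exact: AB.
- have AB0 : A `\` B !=set0.
    by apply/set0P/eqP; rewrite setD_eq0 => AB; apply: AneB; rewrite eqEsubset.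
  have [h [h' [p [hom Bp hp hcvg _]]]] :=
    clopen_contraction clB (clopenD clA clB) B0 AB0 (setDIK B A).
  rewrite setDUK // in hom.
  by exists h, h'; split => //; right; split => //; exists p.
Qed.

End clopen_pieces.

(** * Glued maps and their orbits *)

Definition cvg_to_fixpoint {X : topologicalType} (f : X -> X) (x : X) :=
  exists p, f p = p /\ (fun n => iter n f x) @ \oo --> p.

Lemma fixpoint_cvg_to_fixpoint {X : topologicalType} (f : X -> X) x :
  f x = x -> cvg_to_fixpoint f x.
Proof.
move=> fx; exists x; split => //.
have -> : (fun n => iter n f x) = fun=> x by apply: funext; elim => //= n ->.
exact: cvg_cst.
Qed.

Lemma cvg_to_fixpoint_iter {X : topologicalType} (f : X -> X) n x :
  cvg_to_fixpoint f (iter n f x) -> cvg_to_fixpoint f x.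
Proof.
move=> [p [fp cvp]]; exists p; split => // U /cvp [M _ HM].
exists (M + n)%N => // m /= Mm; have nm : (n <= m)%N by rewrite (leq_trans (leq_addl M n)).
by rewrite -(subnK nm) iterD; apply: HM; rewrite /= leq_subRL // addnC.
Qed.

Section orbit_convergence.
Context {X : topologicalType} {I : Type} (A B : I -> set X) (f : X -> X) (F : I -> X -> X).
Hypotheses (Acover : forall x, exists i, A i x) (Buniq : forall i j x, B i x -> B j x -> i = j).
Hypotheses (fE : forall i x, A i x -> f x = F i x) (FS : forall i x, A i x -> B i (F i x)).
Hypothesis kind : forall i, escaping (A i) (B i) (F i) \/ attracting (A i) (B i) (F i).

Lemma iter_eq_on i x n : (forall m, (m < n)%N -> A i (iter m (F i) x)) ->
  iter n f x = iter n (F i) x.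
Proof.
elim: n => [//|n IH] pre /=; rewrite IH => [|m mn]; last exact/pre/ltnW.
exact/fE/pre.
Qed.

Lemma attracting_cvg_to_fixpoint i x : attracting (A i) (B i) (F i) -> A i x ->
  cvg_to_fixpoint f x.
Proof.
move=> [BA [p [Bp Fp cvp]]] Ax; apply: (@cvg_to_fixpoint_iter _ _ 1).
have Bfx : B i (f x) by rewrite (fE Ax); exact: FS.
have orbitB n : B i (iter n (F i) (f x)) by elim: n => //= n IH; exact/FS/BA.
exists p; split; first by rewrite (fE (BA _ Bp)).
have orbitE n : iter n f (f x) = iter n (F i) (f x).
  by apply: iter_eq_on => m _; exact/BA.
by under eq_fun do rewrite orbitE; exact: cvp.
Qed.

(* An escaping orbit first leaves [A i] into [B i]; the piece [A j] it
   enters cannot be escaping, since then [A j `<=` B j] would meet [B i]. *)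
Lemma orbit_cvg_to_fixpoint x : cvg_to_fixpoint f x.
Proof.
have [i Ax] := Acover x.
case: (kind i) => [[AB esc]|att]; last exact: attracting_cvg_to_fixpoint att Ax.
have [Fx|[n [pre out]]] := esc x Ax.
  by apply: fixpoint_cvg_to_fixpoint; rewrite (fE Ax).
case: n pre out => [_ [] //|n] pre out.
apply: (@cvg_to_fixpoint_iter _ _ n.+1); rewrite (iter_eq_on pre).
have Bz : B i (iter n.+1 (F i) x) by apply: FS; exact: pre.
have [j Az] := Acover (iter n.+1 (F i) x).
case: (kind j) => [[ABj _]|att]; last exact: attracting_cvg_to_fixpoint att Az.
by move: (Az); rewrite (Buniq (ABj _ Az) Bz) => /out.
Qed.

End orbit_convergence.

Lemma near_piece {X : topologicalType} {I : Type} (P : I -> set X) (idx : X -> I) i x :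
  open (P i) -> (forall j y, P j y -> idx y = j) -> P i x -> \forall y \near x, idx y = i.
Proof. by move=> oP idxE Pix; apply: filterS (open_nbhs_nbhs (conj oP Pix)) => y /idxE. Qed.

Section glue.
Context {X : topologicalType} {I : Type} (A B : I -> set X).
Hypotheses (oA : forall i, open (A i)) (oB : forall i, open (B i)).
Hypotheses (Acover : forall x, exists i, A i x) (Auniq : forall i j x, A i x -> A j x -> i = j).
Hypotheses (Bcover : forall y, exists i, B i y) (Buniq : forall i j y, B i y -> B j y -> i = j).

Section glue_homeomorphism.
Variables (F G : I -> X -> X).
Hypothesis hFG : forall i, homeo_on (A i) (B i) (F i) (G i).

Let ia x := projT1 (cid (Acover x)).
Let ib y := projT1 (cid (Bcover y)).
Let iaP x : A (ia x) x := projT2 (cid (Acover x)).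
Let ibP y : B (ib y) y := projT2 (cid (Bcover y)).
Let iaE i x : A i x -> ia x = i. Proof. exact: Auniq (iaP x). Qed.
Let ibE i y : B i y -> ib y = i. Proof. exact: Buniq (ibP y). Qed.

Lemma glue_homeomorphism : exists f, homeomorphism f /\ forall i x, A i x -> f x = F i x.
Proof.
exists (fun x => F (ia x) x); split; last by move=> i x /iaE ->.
exists (fun y => G (ib y) y); split => [x|y|x|y] /=.
- by rewrite (ibE (homeo_mapS (hFG _) (iaP x))) (homeo_mapK (hFG _) (iaP x)).
- by rewrite (iaE (homeo_invS (hFG _) (ibP y))) (homeo_invK (hFG _) (ibP y)).
- apply: (@near_eq_continuous _ _ _ (F (ia x))); last apply: (homeo_map_cont (hFG _) (iaP x)).
  by apply: filterS (near_piece (oA _) iaE (iaP x)) => z ->.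
- apply: (@near_eq_continuous _ _ _ (G (ib y))); last apply: (homeo_inv_cont (hFG _) (ibP y)).
  by apply: filterS (near_piece (oB _) ibE (ibP y)) => z ->.
Qed.

End glue_homeomorphism.

Lemma glue_escaping_attracting :
  (forall i, exists F G, homeo_on (A i) (B i) F G /\
    (escaping (A i) (B i) F \/ attracting (A i) (B i) F)) ->
  exists f, [/\ homeomorphism f, forall i x, A i x -> B i (f x) &
                forall x, cvg_to_fixpoint f x].
Proof.
move=> pieces.
have /choice [FG hFG] i : exists FG : (X -> X) * (X -> X),
    homeo_on (A i) (B i) FG.1 FG.2 /\ (escaping (A i) (B i) FG.1 \/ attracting (A i) (B i) FG.1).
  by have [F [G ?]] := pieces i; exists (F, G).
have [f [homf fE]] := glue_homeomorphism (fun i => proj1 (hFG i)).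
have fS i x : A i x -> B i (f x).
  by move=> Ax; rewrite (fE _ _ Ax); apply: (homeo_mapS (proj1 (hFG i)) Ax).
exists f; split => // x.
apply: (orbit_cvg_to_fixpoint (F := fun i => (FG i).1) Acover Buniq fE) => i.
  by move=> y; apply: (homeo_mapS (proj1 (hFG i))).
exact: proj2 (hFG i).
Qed.

End glue.

Lemma closed_partition_open {X : topologicalType} {I : finType} (P : I -> set X) i :
  (forall j, closed (P j)) -> (forall x, exists j, P j x) ->
  (forall j k x, P j x -> P k x -> j = k) -> open (P i).
Proof.
move=> cP Pcover Puniq.
have -> : P i = ~` \bigcup_(j in [set j | j != i]) P j.
  apply/seteqP; split => [x Pix [j /= /eqP ji Pjx]|x nPx]; first exact/ji/(Puniq _ _ _ Pjx Pix).
  have [j Pjx] := Pcover x; have [<- //|ji] := eqVneq j i.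
  by case: nPx; exists j.
by apply: closed_openC; apply: closed_bigcup => //; exact: finite_finset.
Qed.

Theorem lemma4p1 (R : realType) (K : pseudoMetricType R)
  (hK : hausdorff_space K) (cK : cantor_set [set: K])
  (T : K -> K) (hT : homeomorphism T)
  (N : nat) (Ks : 'I_N -> set K)
  (cKs : forall i, cantor_set (Ks i))
  (disj : forall i j, i != j -> Ks i `&` Ks j = set0)
  (cover : \bigcup_i Ks i = [set: K])
  (cond : forall i,
     (forall y, Ks i y -> forall x, T x = y -> Ks i x) \/
     (forall x, Ks i x -> Ks i (T x))) :
  exists Tt : K -> K,
    [/\ homeomorphism Tt,
        (forall x i, Ks i (Tt x) <-> Ks i (T x)) &
        (forall x, exists p : K, Tt p = p /\ (fun n => iter n Tt x) @ \oo --> p)].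
Proof.
have [Tinv [_ TinvK cT _]] := hT.
case: cK => _ cpK tdK pfK.
have zK := totally_disconnected_zero_dimensional cpK hK tdK.
have Kcover y : exists i, Ks i y.
  have [i _ Kiy] : (\bigcup_i Ks i) y by rewrite cover.
  by exists i.
have Kuniq i j y : Ks i y -> Ks j y -> i = j.
  move=> Kiy Kjy; apply/eqP; apply: contraT => /disj ij.
  by have : (Ks i `&` Ks j) y by []; rewrite ij.
have clK i : clopen (Ks i).
  have cKj j : closed (Ks j) by have [_ ? _ _] := cKs j; exact: compact_closed.
  by split; [exact: closed_partition_open | exact: cKj].
pose L i := T @^-1` Ks i.
have clL i : clopen (L i).
  have [oKi cKi] := clK i.
  by split; [move/continuousP: cT; apply | move/continuous_closedP: cT; apply].
have pieces i : exists F G, homeo_on (L i) (Ks i) F G /\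
    (escaping (L i) (Ks i) F \/ attracting (L i) (Ks i) F).
  have [[y Ky] _ _ _] := cKs i.
  apply: clopen_piece (clL i) (clK i) _ (ex_intro _ y Ky) _ => //.
    by exists (Tinv y); rewrite /L /= TinvK.
  by case: (cond i) => [Kinv|KT]; [left => x Lx; exact: Kinv Lx x erefl | right].
have [Tt [homTt TtS Ttcvg]] := glue_escaping_attracting (fun i => proj1 (clL i))
  (fun i => proj1 (clK i)) (fun x => Kcover (T x)) (fun i j x => Kuniq i j (T x))
  Kcover Kuniq pieces.
exists Tt; split => // x i.
have [j Ljx] := Kcover (T x); have Kj := TtS _ _ Ljx.
by split => Ki; [rewrite (Kuniq _ _ _ Ki Kj) | rewrite (Kuniq _ _ _ Ki Ljx)].
Qed.
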